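(* Let $c_1,\dots,c_k\in(1,\infty)$, let $\lambda\in(0,\infty)^k$ satisfy $\lambda_j/(2g'(\|Y-X\hat\beta^\lambda\|_2^2))=c_j\|(XP_jM_j^{+})^\top\varepsilon\|_{q_j}^*$ for all $j$, and set $a_j:=2(c_j-1)\|(XP_jM_j^{+})^\top\varepsilon\|_{q_j}^*$ for $j=1,\dots,k$. For $a=(a_1,\dots,a_k)$ define $L_a(\beta):=\frac1n\|X(\beta^*-\beta)\|_2^2+\frac1n\sum_{j=1}^ka_j\|M_j\beta\|_{q_j}$. Then, with probability one, $$L_a(\hat\beta^\lambda)\le\Big(1+\max_{j\in\{1,\dots,k\}}\frac{4\|(XP_jM_j^{+})^\top\varepsilon\|_{q_j}^*}{a_j}\Big)\min_{\beta\in\mathbb{R}^p}L_a(\beta).$$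
   Context: Standing setup. Model: $Y=X\beta^*+\varepsilon$ with $Y\in\mathbb{R}^n$, $X\in\mathbb{R}^{n\times p}$, $\beta^*\in\mathbb{R}^p$, $\varepsilon\in\mathbb{R}^n$ (random). Link function $g:\mathbb{R}\to[0,\infty)$ with $g(0)=0$, $g$ continuous and strictly increasing on $[0,\infty)$, continuously differentiable on $(0,\infty)$ with strictly positive and non-increasing derivative $g'$, and such that $\alpha\mapsto g(\|\alpha\|_2^2)$ is strictly convex on $\mathbb{R}^n$. Penalty: $k\ge1$, matrices $M_1,\dots,M_k\in\mathbb{R}^{p\times p}$ with $\bigcap_{j=1}^k\mathrm{Ker}(M_j)=\{0\}$, exponents $q_j\ge1$, $\|\cdot\|_{q_j}$ the $\ell_{q_j}$-norm on $\mathbb{R}^p$, and $\|\cdot\|_{q_j}^*$ its dual norm. For $\lambda\in(0,\infty)^k$, $\hat\beta^\lambda$ denotes any element of $\arg\min_{\beta\in\mathbb{R}^p}\{g(\|Y-X\beta\|_2^2)+\sum_{j=1}^k\lambda_j\|M_j\beta\|_{q_j}\}$. $A^+$ denotes the Moore–Penrose pseudoinverse; $P_1,\dots,P_k\in\mathbb{R}^{p\times p}$ are fixed projection matrices with $\sum_{j=1}^kP_jM_j^+M_j=I_{p\times p}$. Noise assumption: with probability one, $Y\neq0$ and $\min_{j}\|(XP_jM_j^{+})^\top\varepsilon\|_{q_j}^*>0$. *)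

(* Vectors in R^m are functions nat -> R of
   which only the indices 0..m-1 matter; matrices are nat -> nat -> R of which
   only the indices in range matter. *)
From Stdlib Require Import Reals Lra ClassicalEpsilon.
Open Scope R_scope.

Definition vec := nat -> R.
Definition mat := nat -> nat -> R.

Fixpoint rsum (m : nat) (f : nat -> R) : R :=
  match m with O => 0 | S m' => rsum m' f + f m' end.

Definition mv (c : nat) (A : mat) (x : vec) : vec :=
  fun i => rsum c (fun j => A i j * x j).
Definition mm (c : nat) (A B : mat) : mat :=
  fun i l => rsum c (fun j => A i j * B j l).
Definition tr (A : mat) : mat := fun i j => A j i.
Definition idm : mat := fun i j => if Nat.eqb i j then 1 else 0.
Definition msum (k : nat) (F : nat -> mat) : mat :=
  fun i l => rsum k (fun j => F j i l).
Definition mat_eq (r c : nat) (A B : mat) : Prop :=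
  forall i j, (i < r)%nat -> (j < c)%nat -> A i j = B i j.
Definition vec_eq (m : nat) (x y : vec) : Prop :=
  forall i, (i < m)%nat -> x i = y i.

Definition dot (m : nat) (x y : vec) : R := rsum m (fun i => x i * y i).
Definition sqnorm (m : nat) (x : vec) : R := dot m x x.

(* real power with the convention 0^q = 0 (Rpower 0 q would be 1) *)
Definition pw (x q : R) : R := if Rlt_dec 0 x then Rpower x q else 0.

Definition lq_norm (q : R) (m : nat) (x : vec) : R :=
  pw (rsum m (fun i => pw (Rabs (x i)) q)) (/ q).

Definition dual_set (q : R) (m : nat) (z : vec) : R -> Prop :=
  fun t => exists x : vec, lq_norm q m x <= 1 /\ t = dot m z x.
Definition dual_norm (q : R) (m : nat) (z : vec) : R :=
  epsilon (inhabits 0) (fun d => is_lub (dual_set q m z) d).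

Definition is_pinv (r c : nat) (A B : mat) : Prop :=
  mat_eq r c (mm r (mm c A B) A) A /\
  mat_eq c r (mm c (mm r B A) B) B /\
  mat_eq r r (tr (mm c A B)) (mm c A B) /\
  mat_eq c c (tr (mm r B A)) (mm r B A).
Definition pinv (r c : nat) (A : mat) : mat :=
  epsilon (inhabits (fun _ _ => 0)) (is_pinv r c A).

(* maximum of f j over j < k (k >= 1); equals f 0 if k = 0 *)
Fixpoint maxr_aux (k : nat) (f : nat -> R) : R :=
  match k with O => f O | S k' => Rmax (maxr_aux k' f) (f k) end.
Definition max_lt (k : nat) (f : nat -> R) : R := maxr_aux (Nat.pred k) f.

Definition Dnoise (n p : nat) (X : mat) (P M : nat -> mat) (q : nat -> R)
  (eps : vec) (j : nat) : R :=
  dual_norm (q j) p (mv n (tr (mm p (mm p X (P j)) (pinv p p (M j)))) eps).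

Definition resid (n p : nat) (X : mat) (Y b : vec) : vec :=
  fun i => Y i - mv p X b i.
Definition objective (n p k : nat) (g : R -> R) (X : mat) (Y : vec)
  (M : nat -> mat) (q lam : nat -> R) (b : vec) : R :=
  g (sqnorm n (resid n p X Y b)) +
  rsum k (fun j => lam j * lq_norm (q j) p (mv p (M j) b)).
Definition is_argmin (n p k : nat) (g : R -> R) (X : mat) (Y : vec)
  (M : nat -> mat) (q lam : nat -> R) (bh : vec) : Prop :=
  forall b : vec, objective n p k g X Y M q lam bh <= objective n p k g X Y M q lam b.

Definition La (n p k : nat) (X : mat) (bstar : vec) (M : nat -> mat)
  (q a : nat -> R) (b : vec) : R :=
  / INR n * sqnorm n (mv p X (fun i => bstar i - b i)) +
  / INR n * rsum k (fun j => a j * lq_norm (q j) p (mv p (M j) b)).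

Definition link_ok (n : nat) (g dg : R -> R) : Prop :=
  g 0 = 0 /\ (forall x, 0 <= g x) /\ continuity g /\
  (forall x y, 0 <= x -> x < y -> g x < g y) /\
  (forall x, 0 < x -> derivable_pt_lim g x (dg x)) /\
  (forall x, 0 < x -> continuity_pt dg x) /\
  (forall x, 0 < x -> 0 < dg x) /\
  (forall x y, 0 < x -> x <= y -> dg y <= dg x) /\
  (forall (u v : vec) (t : R), ~ vec_eq n u v -> 0 < t < 1 ->
     g (sqnorm n (fun i => t * u i + (1 - t) * v i))
       < t * g (sqnorm n u) + (1 - t) * g (sqnorm n v)).

(* Compare the minimiser bhat with an arbitrary b along the segment between them.
   The penalty is convex and g is differentiable at the residual, so first-order
   optimality gives 2 g'(s) <Y - X bhat, X (b - bhat)> <= pen b - pen bhat.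
   With Y = X b* + eps, the noise term <eps, X (b - bhat)> splits, through
   I = sum_j P_j M_j^+ M_j, into the pairings <(X P_j M_j^+)^T eps, M_j (b - bhat)>,
   each bounded by Hoelder's inequality for the dual norm. The calibration of lambda_j
   and the choice of a_j make the terms ||M_j bhat|| cancel, and the identity
   ||u||^2 = ||u - w||^2 + 2 <u, w> - ||w||^2 for the prediction error yields the
   oracle bound. *)

From Stdlib Require Import Reals Lra Lia ClassicalEpsilon FunctionalExtensionality.
Open Scope R_scope.

Lemma rsum_ext m f g : (forall i, (i < m)%nat -> f i = g i) -> rsum m f = rsum m g.
Proof.
  induction m as [|m IH]; intros H; simpl; [reflexivity|].
  rewrite IH, H; [reflexivity | lia | intros; apply H; lia].
Qed.

Lemma rsum_plus m f g : rsum m (fun i => f i + g i) = rsum m f + rsum m g.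
Proof. induction m as [|m IH]; simpl; [lra|]; rewrite IH; lra. Qed.

Lemma rsum_minus m f g : rsum m (fun i => f i - g i) = rsum m f - rsum m g.
Proof. induction m as [|m IH]; simpl; [lra|]; rewrite IH; lra. Qed.

Lemma rsum_scal_l m c f : rsum m (fun i => c * f i) = c * rsum m f.
Proof. induction m as [|m IH]; simpl; [lra|]; rewrite IH; lra. Qed.

Lemma rsum_scal_r m c f : rsum m (fun i => f i * c) = rsum m f * c.
Proof. induction m as [|m IH]; simpl; [lra|]; rewrite IH; lra. Qed.

Lemma rsum_const0 m : rsum m (fun _ => 0) = 0.
Proof. induction m as [|m IH]; simpl; lra. Qed.

Lemma rsum_le m f g : (forall i, (i < m)%nat -> f i <= g i) -> rsum m f <= rsum m g.
Proof.
  induction m as [|m IH]; intros H; simpl; [lra|].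
  assert (rsum m f <= rsum m g) by (apply IH; intros; apply H; lia).
  assert (f m <= g m) by (apply H; lia).
  lra.
Qed.

Lemma rsum_nonneg m f : (forall i, (i < m)%nat -> 0 <= f i) -> 0 <= rsum m f.
Proof. intros H; rewrite <- (rsum_const0 m); apply rsum_le; auto. Qed.

Lemma rsum_ge_term m f i :
  (forall j, (j < m)%nat -> 0 <= f j) -> (i < m)%nat -> f i <= rsum m f.
Proof.
  induction m as [|m IH]; intros H Hi; [lia|]; simpl.
  assert (0 <= rsum m f) by (apply rsum_nonneg; intros; apply H; lia).
  assert (0 <= f m) by (apply H; lia).
  destruct (Nat.eq_dec i m) as [->|Him]; [lra|].
  assert (f i <= rsum m f) by (apply IH; [intros; apply H|]; lia).
  lra.
Qed.

Lemma rsum_exchange m k (f : nat -> nat -> R) :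
  rsum m (fun i => rsum k (fun j => f i j)) = rsum k (fun j => rsum m (fun i => f i j)).
Proof.
  induction m as [|m IH]; simpl; [now rewrite rsum_const0|].
  now rewrite IH, <- rsum_plus.
Qed.

Lemma rsum_idm m x i : (i < m)%nat -> rsum m (fun j => idm i j * x j) = x i.
Proof.
  induction m as [|m IH]; intros Hi; [lia|]; simpl; unfold idm at 2.
  destruct (Nat.eqb_spec i m) as [->|Him].
  - rewrite (rsum_ext m _ (fun _ => 0)), rsum_const0; [lra|].
    intros j Hj; unfold idm; destruct (Nat.eqb_spec m j); [lia|lra].
  - rewrite IH by lia; lra.
Qed.

Lemma pw_nonneg x q : 0 <= pw x q.
Proof. unfold pw; destruct (Rlt_dec 0 x); [left; apply exp_pos|lra]. Qed.

Lemma pw_pos x q : 0 < x -> pw x q = Rpower x q.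
Proof. unfold pw; destruct (Rlt_dec 0 x); [auto|lra]. Qed.

Lemma pw_nonpos x q : x <= 0 -> pw x q = 0.
Proof. unfold pw; destruct (Rlt_dec 0 x); [lra|auto]. Qed.

Lemma pw_gt0 x q : 0 < x -> 0 < pw x q.
Proof. intros; rewrite pw_pos by auto; apply exp_pos. Qed.

Lemma pw_eq0 x q : 0 <= x -> pw x q = 0 -> x = 0.
Proof.
  intros Hx H; destruct (Req_dec x 0) as [|Hx0]; auto.
  assert (0 < pw x q) by (apply pw_gt0; lra); lra.
Qed.

Lemma Rpower_1_l e : Rpower 1 e = 1.
Proof. unfold Rpower; rewrite ln_1, Rmult_0_r; apply exp_0. Qed.

Lemma pw_1 q : pw 1 q = 1.
Proof. rewrite pw_pos by lra; apply Rpower_1_l. Qed.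

Lemma pw_pwK x q : 0 <= x -> 0 < q -> pw (pw x q) (/ q) = x.
Proof.
  intros Hx Hq; destruct (Req_dec x 0) as [->|Hx0].
  - rewrite (pw_nonpos 0), pw_nonpos; lra.
  - rewrite (pw_pos x), pw_pos by (try apply exp_pos; lra).
    rewrite Rpower_mult, Rinv_r, Rpower_1; lra.
Qed.

Lemma pw_invK x q : 0 <= x -> 0 < q -> pw (pw x (/ q)) q = x.
Proof.
  intros Hx Hq; rewrite <- (Rinv_inv q) at 2.
  apply pw_pwK; [auto|apply Rinv_0_lt_compat; auto].
Qed.

Lemma pw_mult x y q : 0 <= x -> 0 <= y -> pw (x * y) q = pw x q * pw y q.
Proof.
  intros Hx Hy.
  destruct (Req_dec x 0) as [->|Hx0]; [rewrite Rmult_0_l, !(pw_nonpos 0); lra|].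
  destruct (Req_dec y 0) as [->|Hy0]; [rewrite Rmult_0_r, !(pw_nonpos 0); lra|].
  rewrite !pw_pos by (try apply Rmult_lt_0_compat; lra).
  rewrite Rpower_mult_distr; lra.
Qed.

Lemma pw_Rinv x q : 0 < x -> pw (/ x) q = / pw x q.
Proof.
  intros Hx; rewrite !pw_pos by (auto; apply Rinv_0_lt_compat; auto).
  unfold Rpower; rewrite ln_Rinv, <- exp_Ropp by auto; f_equal; ring.
Qed.

Lemma pw_le x y q : 0 < q -> x <= y -> pw x q <= pw y q.
Proof.
  intros Hq H; destruct (Rle_dec x 0).
  - rewrite (pw_nonpos x) by auto; apply pw_nonneg.
  - rewrite !pw_pos by lra; apply Rle_Rpower_l; lra.
Qed.

Lemma pw_lt x y q : 0 < q -> 0 <= x -> x < y -> pw x q < pw y q.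
Proof.
  intros Hq Hx H; destruct (Req_dec x 0) as [->|Hx0].
  - rewrite pw_nonpos by lra; apply pw_gt0; lra.
  - rewrite !pw_pos by lra; apply Rlt_Rpower_l; lra.
Qed.

(* t |-> t^q - q t has derivative q (t^(q-1) - 1), whose
   sign is that of t - 1, so it is minimal at t = 1. *)
Lemma pw_bernoulli u q : 1 <= q -> 0 <= u -> 1 + q * (u - 1) <= pw u q.
Proof.
  intros Hq Hu; destruct (Req_dec u 0) as [->|Hu0]; [rewrite pw_nonpos; nra|].
  rewrite pw_pos by lra.
  set (f := fun t => Rpower t q - q * t).
  set (f' := fun t => q * (Rpower t (q - 1) - 1)).
  assert (Df : forall t, 0 < t -> derivable_pt_lim f t (f' t)).
  { intros t Ht; unfold f'; rewrite Rmult_minus_distr_l, Rmult_1_r.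
    apply derivable_pt_lim_minus; [now apply derivable_pt_lim_power|].
    rewrite <- (Rmult_1_r q) at 2; apply derivable_pt_lim_scal, derivable_pt_lim_id. }
  assert (f u >= f 1); [|unfold f in *; rewrite Rpower_1_l in *; lra].
  destruct (Rtotal_order u 1) as [Hlt|[->|Hgt]]; [| lra |].
  - destruct (MVT_cor2 f f' u 1 Hlt) as [t [Ht Ht']]; [intros t Ht; apply Df; lra|].
    assert (Rpower t (q - 1) <= 1) by (rewrite <- (Rpower_1_l (q - 1)) at 2; apply Rle_Rpower_l; lra).
    assert (f' t <= 0) by (unfold f'; nra).
    nra.
  - destruct (MVT_cor2 f f' 1 u Hgt) as [t [Ht Ht']]; [intros t Ht; apply Df; lra|].
    assert (1 <= Rpower t (q - 1)) by (rewrite <- (Rpower_1_l (q - 1)) at 1; apply Rle_Rpower_l; lra).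
    assert (0 <= f' t) by (unfold f'; nra).
    nra.
Qed.

Lemma pw_tangent x y q : 1 <= q -> 0 < x -> 0 <= y ->
  pw x q + q * (pw x q / x) * (y - x) <= pw y q.
Proof.
  intros Hq Hx Hy.
  assert (Hyx : 0 <= y / x) by (apply Rmult_le_pos; [lra|left; apply Rinv_0_lt_compat; lra]).
  assert (B := pw_bernoulli (y / x) q Hq Hyx).
  assert (Ey : pw y q = pw x q * pw (y / x) q)
    by (rewrite <- pw_mult by lra; f_equal; field; lra).
  assert (0 < pw x q) by (apply pw_gt0; lra).
  rewrite Ey.
  replace (pw x q + q * (pw x q / x) * (y - x)) with (pw x q * (1 + q * (y / x - 1)))
    by (field; lra).
  apply Rmult_le_compat_l; lra.
Qed.

Lemma pw_convex x y l q : 1 <= q -> 0 <= x -> 0 <= y -> 0 <= l <= 1 ->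
  pw (l * x + (1 - l) * y) q <= l * pw x q + (1 - l) * pw y q.
Proof.
  intros Hq Hx Hy Hl.
  assert (0 <= pw x q) by apply pw_nonneg; assert (0 <= pw y q) by apply pw_nonneg.
  set (z := l * x + (1 - l) * y).
  destruct (Req_dec z 0) as [Hz|Hz]; [rewrite Hz, pw_nonpos; nra|].
  assert (0 < z) by (unfold z in *; nra).
  assert (Tx := pw_tangent z x q Hq ltac:(lra) Hx).
  assert (Ty := pw_tangent z y q Hq ltac:(lra) Hy).
  set (s := q * (pw z q / z)) in *.
  assert (l * (pw z q + s * (x - z)) + (1 - l) * (pw z q + s * (y - z)) = pw z q)
    by (unfold z; ring).
  nra.
Qed.

(* Minkowski's inequality coordinatewise: x + y is (a + b) times a convex combination
   of x / a and y / b. *)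
Lemma pw_add_le x y a b q : 1 <= q -> 0 <= x -> 0 <= y -> 0 < a -> 0 < b ->
  pw (x + y) q
    <= pw (a + b) q * (a / (a + b) * (pw x q / pw a q) + b / (a + b) * (pw y q / pw b q)).
Proof.
  intros Hq Hx Hy Ha Hb.
  set (l := a / (a + b)).
  assert (Hl : 0 <= l <= 1).
  { unfold l; split; [apply Rmult_le_pos; [lra|left; apply Rinv_0_lt_compat; lra]|].
    apply Rmult_le_reg_r with (a + b); [lra|].
    unfold Rdiv; rewrite Rmult_assoc, Rinv_l by lra; lra. }
  assert (0 <= x / a) by (apply Rmult_le_pos; [lra|left; apply Rinv_0_lt_compat; lra]).
  assert (0 <= y / b) by (apply Rmult_le_pos; [lra|left; apply Rinv_0_lt_compat; lra]).
  replace (x + y) with ((a + b) * (l * (x / a) + (1 - l) * (y / b))) by (unfold l; field; lra).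
  replace (b / (a + b)) with (1 - l) by (unfold l; field; lra).
  rewrite pw_mult by nra.
  apply Rmult_le_compat_l; [apply pw_nonneg|].
  assert (Hdiv : forall z c, 0 <= z -> 0 < c -> pw (z / c) q = pw z q / pw c q).
  { intros z c Hz Hc; unfold Rdiv; rewrite pw_mult, pw_Rinv; auto.
    left; apply Rinv_0_lt_compat; auto. }
  rewrite <- !Hdiv by lra.
  now apply pw_convex.
Qed.

Definition lq_powsum (q : R) (m : nat) (x : vec) : R := rsum m (fun i => pw (Rabs (x i)) q).

Lemma lq_powsum_nonneg q m x : 0 <= lq_powsum q m x.
Proof. apply rsum_nonneg; intros; apply pw_nonneg. Qed.

Lemma lq_norm_nonneg q m x : 0 <= lq_norm q m x.
Proof. apply pw_nonneg. Qed.

Lemma pw_lq_norm q m x : 0 < q -> pw (lq_norm q m x) q = lq_powsum q m x.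
Proof. intros; apply pw_invK; [apply lq_powsum_nonneg|auto]. Qed.

Lemma lq_norm_ext_abs q m x y :
  (forall i, (i < m)%nat -> Rabs (x i) = Rabs (y i)) -> lq_norm q m x = lq_norm q m y.
Proof. intros H; unfold lq_norm; f_equal; apply rsum_ext; intros; rewrite H; auto. Qed.

Lemma lq_norm_scal q m c x : 0 < q -> lq_norm q m (fun i => c * x i) = Rabs c * lq_norm q m x.
Proof.
  intros Hq; unfold lq_norm.
  rewrite (rsum_ext m _ (fun i => pw (Rabs c) q * pw (Rabs (x i)) q)).
  - rewrite rsum_scal_l, pw_mult, pw_pwK; auto using Rabs_pos, pw_nonneg.
    apply rsum_nonneg; intros; apply pw_nonneg.
  - intros; rewrite Rabs_mult; apply pw_mult; apply Rabs_pos.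
Qed.

Lemma lq_norm_zero q m : lq_norm q m (fun _ => 0) = 0.
Proof.
  unfold lq_norm; rewrite (rsum_ext m _ (fun _ => 0)), rsum_const0; [apply pw_nonpos; lra|].
  intros; rewrite Rabs_R0; apply pw_nonpos; lra.
Qed.

Lemma lq_norm_eq0 q m x : 0 < q -> lq_norm q m x = 0 -> forall i, (i < m)%nat -> x i = 0.
Proof.
  intros Hq H i Hi.
  assert (Hs : lq_powsum q m x = 0)
    by (apply (pw_eq0 _ (/ q)); [apply lq_powsum_nonneg|exact H]).
  assert (pw (Rabs (x i)) q <= 0).
  { rewrite <- Hs; apply (rsum_ge_term m (fun i => pw (Rabs (x i)) q)); auto.
    intros; apply pw_nonneg. }
  assert (Habs : Rabs (x i) = 0).
  2:{ destruct (Req_dec (x i) 0) as [|Hx]; [auto|now apply Rabs_no_R0 in Hx]. }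
  apply (pw_eq0 _ q); [apply Rabs_pos|]; generalize (pw_nonneg (Rabs (x i)) q); lra.
Qed.

Lemma lq_norm_le1_coord q m x i : 0 < q -> lq_norm q m x <= 1 -> (i < m)%nat -> Rabs (x i) <= 1.
Proof.
  intros Hq H Hi.
  assert (lq_powsum q m x <= 1)
    by (rewrite <- (pw_lq_norm q m x Hq), <- (pw_1 q); now apply pw_le).
  assert (pw (Rabs (x i)) q <= lq_powsum q m x)
    by (apply (rsum_ge_term m (fun i => pw (Rabs (x i)) q)); auto; intros; apply pw_nonneg).
  destruct (Rle_dec (Rabs (x i)) 1) as [|Hgt]; auto.
  assert (pw 1 q < pw (Rabs (x i)) q) by (apply pw_lt; lra).
  rewrite pw_1 in *; lra.
Qed.

Lemma lq_norm_triangle q m u v : 1 <= q ->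
  lq_norm q m (fun i => u i + v i) <= lq_norm q m u + lq_norm q m v.
Proof.
  intros Hq.
  set (a := lq_norm q m u); set (b := lq_norm q m v).
  assert (0 <= a) by apply lq_norm_nonneg; assert (0 <= b) by apply lq_norm_nonneg.
  destruct (Req_dec a 0) as [Ha|Ha].
  { rewrite Ha, Rplus_0_l; right; apply lq_norm_ext_abs; intros.
    rewrite (lq_norm_eq0 q m u) by (auto; lra); f_equal; ring. }
  destruct (Req_dec b 0) as [Hb|Hb].
  { rewrite Hb, Rplus_0_r; right; apply lq_norm_ext_abs; intros.
    rewrite (lq_norm_eq0 q m v) by (auto; lra); f_equal; ring. }
  assert (Hpa : pw a q = lq_powsum q m u) by (apply pw_lq_norm; lra).
  assert (Hpb : pw b q = lq_powsum q m v) by (apply pw_lq_norm; lra).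
  assert (0 < pw a q) by (apply pw_gt0; lra); assert (0 < pw b q) by (apply pw_gt0; lra).
  assert (Hsum : lq_powsum q m (fun i => u i + v i) <= pw (a + b) q).
  { eapply Rle_trans with (rsum m (fun i => pw (a + b) q *
      (a / (a + b) * (pw (Rabs (u i)) q / pw a q) + b / (a + b) * (pw (Rabs (v i)) q / pw b q)))).
    - apply rsum_le; intros i Hi.
      eapply Rle_trans; [apply pw_le; [lra|apply Rabs_triang]|].
      apply pw_add_le; auto using Rabs_pos; lra.
    - rewrite rsum_scal_l, rsum_plus, !rsum_scal_l; unfold Rdiv; rewrite !rsum_scal_r.
      fold (lq_powsum q m u) (lq_powsum q m v); rewrite <- Hpa, <- Hpb.
      right; field; lra. }
  unfold lq_norm; fold (lq_powsum q m (fun i => u i + v i)).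
  rewrite <- (pw_pwK (a + b) q) by lra.
  apply pw_le; [apply Rinv_0_lt_compat; lra|auto].
Qed.

Lemma lq_norm_convex q m x y t : 1 <= q -> 0 <= t <= 1 ->
  lq_norm q m (fun i => t * x i + (1 - t) * y i) <= t * lq_norm q m x + (1 - t) * lq_norm q m y.
Proof.
  intros Hq Ht.
  eapply Rle_trans; [apply (lq_norm_triangle q m (fun i => t * x i) (fun i => (1 - t) * y i)); auto|].
  rewrite !lq_norm_scal, !Rabs_right by lra; lra.
Qed.

Lemma dot_zero_r m z : dot m z (fun _ => 0) = 0.
Proof. unfold dot; rewrite (rsum_ext m _ (fun _ => 0)), rsum_const0; [|intros; ring]; auto. Qed.

Lemma dot_scal_r m z c x : dot m z (fun i => c * x i) = c * dot m z x.
Proof. unfold dot; rewrite <- rsum_scal_l; apply rsum_ext; intros; ring. Qed.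

Lemma dot_minus_r m z x y : dot m z (fun i => x i - y i) = dot m z x - dot m z y.
Proof. unfold dot; rewrite <- rsum_minus; apply rsum_ext; intros; ring. Qed.

Lemma dot_ext_r m z x y : vec_eq m x y -> dot m z x = dot m z y.
Proof. intros H; unfold dot; apply rsum_ext; intros; rewrite H; auto. Qed.

(* Coordinates of the unit ball are bounded by 1, so ||z||_1 bounds the dual set. *)
Lemma dual_norm_lub q m z : 0 < q -> is_lub (dual_set q m z) (dual_norm q m z).
Proof.
  intros Hq; unfold dual_norm; apply epsilon_spec.
  destruct (completeness (dual_set q m z)) as [d Hd]; [| |now exists d].
  - exists (rsum m (fun i => Rabs (z i))); intros t [x [Hx ->]]; unfold dot.
    apply rsum_le; intros i Hi.
    assert (Rabs (x i) <= 1) by (eapply lq_norm_le1_coord; eauto).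
    eapply Rle_trans; [apply Rle_abs|]; rewrite Rabs_mult.
    generalize (Rabs_pos (z i)) (Rabs_pos (x i)); nra.
  - exists 0, (fun _ => 0); rewrite lq_norm_zero, dot_zero_r; split; lra.
Qed.

Lemma dot_le_dual_norm q m z x : 1 <= q -> dot m z x <= dual_norm q m z * lq_norm q m x.
Proof.
  intros Hq; destruct (dual_norm_lub q m z ltac:(lra)) as [Hub _].
  set (L := lq_norm q m x); assert (0 <= L) by apply lq_norm_nonneg.
  destruct (Req_dec L 0) as [HL|HL].
  - rewrite HL, Rmult_0_r, <- (dot_zero_r m z); right; apply dot_ext_r.
    intros i Hi; apply (lq_norm_eq0 q m x); auto; lra.
  - assert (Hx : dot m z (fun i => / L * x i) <= dual_norm q m z).
    { apply Hub; eexists; split; [|reflexivity].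
      rewrite lq_norm_scal, Rabs_right, Rinv_l; fold L; try lra.
      left; apply Rinv_0_lt_compat; lra. }
    rewrite dot_scal_r in Hx.
    apply Rmult_le_compat_l with (r := L) in Hx; auto.
    rewrite <- Rmult_assoc, Rinv_r in Hx by auto; lra.
Qed.

Lemma mv_comb c A x y a b :
  mv c A (fun i => a * x i + b * y i) = fun i => a * mv c A x i + b * mv c A y i.
Proof.
  apply functional_extensionality; intro i; unfold mv.
  rewrite <- !rsum_scal_l, <- rsum_plus; apply rsum_ext; intros; ring.
Qed.

Lemma mv_minus c A x y i : mv c A (fun i => x i - y i) i = mv c A x i - mv c A y i.
Proof. unfold mv; rewrite <- rsum_minus; apply rsum_ext; intros; ring. Qed.

Lemma mv_ext c A x y : vec_eq c x y -> mv c A x = mv c A y.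
Proof.
  intros H; apply functional_extensionality; intro i; unfold mv.
  apply rsum_ext; intros; rewrite H; auto.
Qed.

Lemma mv_mm c c' A B x : mv c (mm c' A B) x = mv c' A (mv c B x).
Proof.
  apply functional_extensionality; intro i; unfold mv, mm.
  rewrite (rsum_ext c _ (fun l => rsum c' (fun j => A i j * B j l * x l)))
    by (intros; now rewrite <- rsum_scal_r).
  rewrite rsum_exchange; apply rsum_ext; intros.
  rewrite <- rsum_scal_l; apply rsum_ext; intros; ring.
Qed.

Lemma mv_msum c k F x i : mv c (msum k F) x i = rsum k (fun j => mv c (F j) x i).
Proof.
  unfold mv, msum; rewrite <- rsum_exchange; apply rsum_ext; intros.
  now rewrite rsum_scal_r.
Qed.

Lemma mv_rsum c A k f :
  mv c A (fun i => rsum k (fun j => f j i)) = fun i => rsum k (fun j => mv c A (f j) i).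
Proof.
  apply functional_extensionality; intro i; unfold mv.
  rewrite <- rsum_exchange; apply rsum_ext; intros; now rewrite rsum_scal_l.
Qed.

Lemma mv_idm m x : vec_eq m (mv m idm x) x.
Proof. intros i Hi; apply rsum_idm; auto. Qed.

Lemma mv_mat_eq m A B x : mat_eq m m A B -> vec_eq m (mv m A x) (mv m B x).
Proof. intros H i Hi; unfold mv; apply rsum_ext; intros; rewrite H; auto. Qed.

Lemma dot_mv_tr n p e A x : dot n e (mv p A x) = dot p (mv n (tr A) e) x.
Proof.
  unfold dot, mv, tr.
  rewrite (rsum_ext n _ (fun i => rsum p (fun j => e i * A i j * x j)))
    by (intros; rewrite <- rsum_scal_l; apply rsum_ext; intros; ring).
  rewrite rsum_exchange; apply rsum_ext; intros.
  rewrite <- rsum_scal_r; apply rsum_ext; intros; ring.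
Qed.

Lemma dot_rsum_r m k e f :
  dot m e (fun i => rsum k (fun j => f j i)) = rsum k (fun j => dot m e (f j)).
Proof. unfold dot; rewrite <- rsum_exchange; apply rsum_ext; intros; now rewrite rsum_scal_l. Qed.

(* Inserting the partition of unity I = sum_j P_j M_j^+ M_j between X and d. *)
Lemma dot_mv_decomp n p k X (M P : nat -> mat) (e d : vec) :
  mat_eq p p (msum k (fun j => mm p (P j) (mm p (pinv p p (M j)) (M j)))) idm ->
  dot n e (mv p X d) =
  rsum k (fun j => dot p (mv n (tr (mm p (mm p X (P j)) (pinv p p (M j)))) e) (mv p (M j) d)).
Proof.
  intros H.
  assert (Hd : vec_eq p d
    (fun i => rsum k (fun j => mv p (mm p (P j) (mm p (pinv p p (M j)) (M j))) d i))).
  { intros i Hi; rewrite <- mv_msum, (mv_mat_eq p _ idm) by auto; now rewrite mv_idm. }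
  rewrite (mv_ext p X _ _ Hd), mv_rsum, dot_rsum_r.
  apply rsum_ext; intros j Hj; rewrite <- dot_mv_tr, !mv_mm; reflexivity.
Qed.

Lemma derivable_pt_lim_quadratic s A B :
  derivable_pt_lim (fun t => s - 2 * t * A + t * t * B) 0 (- 2 * A).
Proof.
  assert (Hlin : derivable_pt_lim (fun t => 2 * A * t) 0 (2 * A * 1))
    by apply derivable_pt_lim_scal, derivable_pt_lim_id.
  assert (Hsq : derivable_pt_lim (fun t => t * t) 0 (1 * 0 + 0 * 1))
    by (apply (derivable_pt_lim_mult id id); apply derivable_pt_lim_id).
  assert (H := derivable_pt_lim_plus _ _ 0 _ _
    (derivable_pt_lim_minus _ _ 0 _ _ (derivable_pt_lim_const s 0) Hlin)
    (derivable_pt_lim_mult _ _ 0 _ _ Hsq (derivable_pt_lim_const B 0))).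
  replace (- 2 * A) with (0 - 2 * A * 1 + ((1 * 0 + 0 * 1) * B + 0 * 0 * 0)) by ring.
  eapply derivable_pt_lim_ext; [|exact H].
  intros t; unfold plus_fct, minus_fct, mult_fct, fct_cte; ring.
Qed.

Lemma derivable_pt_lim_0_ge f l Q :
  derivable_pt_lim f 0 l -> (forall t, 0 < t <= 1 -> f 0 - f t <= t * Q) -> - l <= Q.
Proof.
  intros Hf Hdec; destruct (Rle_dec (- l) Q) as [|HlQ]; auto; exfalso.
  destruct (Hf (- l - Q) ltac:(lra)) as [[del Hdel] Hlim]; simpl in Hlim.
  set (t := Rmin (del / 2) (1 / 2)).
  assert (Ht : 0 < t <= 1 / 2) by (split; [apply Rmin_glb_lt; lra|apply Rmin_r]).
  assert (t <= del / 2) by apply Rmin_l.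
  specialize (Hlim t ltac:(lra) ltac:(rewrite Rabs_right; lra)).
  rewrite Rplus_0_l in Hlim; apply Rabs_def2 in Hlim.
  specialize (Hdec t ltac:(lra)).
  assert (Hq : (f t - f 0) / t * t = f t - f 0) by (field; lra).
  nra.
Qed.

Definition penalty (p k : nat) (M : nat -> mat) (q lam : nat -> R) (b : vec) : R :=
  rsum k (fun j => lam j * lq_norm (q j) p (mv p (M j) b)).

Lemma penalty_convex p k M q lam b b' t :
  (forall j, (j < k)%nat -> 1 <= q j) -> (forall j, (j < k)%nat -> 0 <= lam j) -> 0 <= t <= 1 ->
  penalty p k M q lam (fun i => t * b i + (1 - t) * b' i)
    <= t * penalty p k M q lam b + (1 - t) * penalty p k M q lam b'.
Proof.
  intros Hq Hlam Ht; unfold penalty.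
  rewrite <- !rsum_scal_l, <- rsum_plus; apply rsum_le; intros j Hj.
  rewrite mv_comb.
  assert (C := lq_norm_convex (q j) p (mv p (M j) b) (mv p (M j) b') t (Hq j Hj) Ht).
  apply Rmult_le_compat_l with (r := lam j) in C; auto; lra.
Qed.

Lemma sqnorm_resid_segment n p X Y b b' t :
  sqnorm n (resid n p X Y (fun i => t * b i + (1 - t) * b' i))
  = sqnorm n (resid n p X Y b') - 2 * t * dot n (resid n p X Y b') (mv p X (fun i => b i - b' i))
    + t * t * sqnorm n (mv p X (fun i => b i - b' i)).
Proof.
  unfold sqnorm, dot; rewrite <- !rsum_scal_l, <- rsum_minus, <- rsum_plus.
  apply rsum_ext; intros i Hi; unfold resid; rewrite mv_comb, mv_minus; ring.
Qed.

(* The penalty is not differentiable, so optimality along the segment towards b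
   only yields an inequality. *)
Lemma argmin_first_order n p k g dg X Y M q lam bh b :
  (forall j, (j < k)%nat -> 1 <= q j) -> (forall j, (j < k)%nat -> 0 <= lam j) ->
  is_argmin n p k g X Y M q lam bh ->
  derivable_pt_lim g (sqnorm n (resid n p X Y bh)) (dg (sqnorm n (resid n p X Y bh))) ->
  2 * dg (sqnorm n (resid n p X Y bh)) * dot n (resid n p X Y bh) (mv p X (fun i => b i - bh i))
    <= penalty p k M q lam b - penalty p k M q lam bh.
Proof.
  intros Hq Hlam Hmin Hg.
  set (s := sqnorm n (resid n p X Y bh)) in *.
  set (A := dot n (resid n p X Y bh) (mv p X (fun i => b i - bh i))).
  set (B := sqnorm n (mv p X (fun i => b i - bh i))).
  assert (Hder : derivable_pt_lim (comp g (fun t => s - 2 * t * A + t * t * B)) 0 (dg s * (- 2 * A))).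
  { apply derivable_pt_lim_comp; [apply derivable_pt_lim_quadratic|].
    replace (s - 2 * 0 * A + 0 * 0 * B) with s by ring; auto. }
  enough (- (dg s * (- 2 * A)) <= penalty p k M q lam b - penalty p k M q lam bh) by lra.
  apply (derivable_pt_lim_0_ge _ _ _ Hder); intros t Ht; unfold comp.
  replace (s - 2 * 0 * A + 0 * 0 * B) with s by ring.
  assert (Hobj := Hmin (fun i => t * b i + (1 - t) * bh i)); unfold objective in Hobj.
  rewrite sqnorm_resid_segment in Hobj; fold s A B in Hobj.
  fold (penalty p k M q lam bh) (penalty p k M q lam (fun i => t * b i + (1 - t) * bh i)) in Hobj.
  assert (Hpen := penalty_convex p k M q lam b bh t Hq Hlam ltac:(lra)).
  lra.
Qed.

Lemma sqnorm_nonneg m x : 0 <= sqnorm m x.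
Proof. apply rsum_nonneg; intros; apply Rle_0_sqr. Qed.

(* ||u||^2 = ||u - w||^2 + 2 <u, w> - ||w||^2 *)
Lemma sqnorm_le_sub m u w : sqnorm m u <= sqnorm m (fun i => u i - w i) + 2 * dot m u w.
Proof.
  assert (E : sqnorm m (fun i => u i - w i) = sqnorm m u - 2 * dot m u w + sqnorm m w).
  { unfold sqnorm, dot; rewrite <- rsum_scal_l, <- rsum_minus, <- rsum_plus.
    apply rsum_ext; intros; ring. }
  generalize (sqnorm_nonneg m w); lra.
Qed.

Lemma prediction_error_le n p X bstar eps Y bh b :
  (forall i, (i < n)%nat -> Y i = mv p X bstar i + eps i) ->
  sqnorm n (mv p X (fun i => bstar i - bh i))
    <= sqnorm n (mv p X (fun i => bstar i - b i))
       + 2 * (dot n (resid n p X Y bh) (mv p X (fun i => b i - bh i))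
              - dot n eps (mv p X (fun i => b i - bh i))).
Proof.
  intros Hmod.
  eapply Rle_trans; [apply (sqnorm_le_sub n _ (mv p X (fun i => b i - bh i)))|].
  apply Req_le; f_equal.
  - apply rsum_ext; intros i Hi; rewrite !mv_minus; ring.
  - f_equal; unfold dot; rewrite <- rsum_minus; apply rsum_ext; intros i Hi.
    unfold resid; rewrite mv_minus, Hmod by auto; ring.
Qed.

Lemma argmin_first_order_calibrated n p k g dg X Y M q lam kappa bh b :
  (forall j, (j < k)%nat -> 1 <= q j) -> (forall j, (j < k)%nat -> 0 <= lam j) ->
  is_argmin n p k g X Y M q lam bh ->
  derivable_pt_lim g (sqnorm n (resid n p X Y bh)) (dg (sqnorm n (resid n p X Y bh))) ->
  0 < dg (sqnorm n (resid n p X Y bh)) ->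
  (forall j, (j < k)%nat -> lam j / (2 * dg (sqnorm n (resid n p X Y bh))) = kappa j) ->
  dot n (resid n p X Y bh) (mv p X (fun i => b i - bh i))
    <= rsum k (fun j => kappa j * (lq_norm (q j) p (mv p (M j) b)
                                   - lq_norm (q j) p (mv p (M j) bh))).
Proof.
  intros Hq Hlam Hmin Hg HD Hkappa.
  assert (H := argmin_first_order n p k g dg X Y M q lam bh b Hq Hlam Hmin Hg).
  set (D := dg (sqnorm n (resid n p X Y bh))) in *.
  unfold penalty in H; rewrite <- rsum_minus in H.
  rewrite (rsum_ext k _ (fun j => 2 * D * (kappa j * (lq_norm (q j) p (mv p (M j) b)
                                   - lq_norm (q j) p (mv p (M j) bh))))) in H.
  - rewrite rsum_scal_l in H; apply Rmult_le_reg_l with (2 * D); lra.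
  - intros j Hj; rewrite <- (Hkappa j Hj); field; lra.
Qed.

Lemma noise_correlation_ge n p k X (M P : nat -> mat) (q : nat -> R) eps b bh :
  (forall j, (j < k)%nat -> 1 <= q j) ->
  mat_eq p p (msum k (fun j => mm p (P j) (mm p (pinv p p (M j)) (M j)))) idm ->
  - rsum k (fun j => Dnoise n p X P M q eps j
                     * (lq_norm (q j) p (mv p (M j) b) + lq_norm (q j) p (mv p (M j) bh)))
    <= dot n eps (mv p X (fun i => b i - bh i)).
Proof.
  intros Hq Hpart; rewrite (dot_mv_decomp n p k X M P) by auto.
  rewrite <- (Rmult_1_l (rsum _ _)), Ropp_mult_distr_l, <- rsum_scal_l.
  apply rsum_le; intros j Hj; unfold Dnoise.
  set (z := mv n (tr (mm p (mm p X (P j)) (pinv p p (M j)))) eps).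
  assert (Hb := dot_le_dual_norm (q j) p z (fun i => -1 * mv p (M j) b i) (Hq j Hj)).
  assert (Hbh := dot_le_dual_norm (q j) p z (mv p (M j) bh) (Hq j Hj)).
  rewrite dot_scal_r, lq_norm_scal, (Rabs_left (-1)) in Hb by (specialize (Hq j Hj); lra).
  rewrite (dot_ext_r p z _ (fun i => mv p (M j) b i - mv p (M j) bh i))
    by (intros i Hi; apply mv_minus).
  rewrite dot_minus_r; lra.
Qed.

Lemma oracle_combination k (N c a nb nh : nat -> R) (m uu vv cr ce : R) :
  (forall j, (j < k)%nat -> a j = 2 * (c j - 1) * N j) ->
  (forall j, (j < k)%nat -> 0 <= nb j) ->
  (forall j, (j < k)%nat -> 4 * N j <= m * a j) ->
  0 <= m -> 0 <= vv ->
  uu <= vv + 2 * (cr - ce) ->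
  cr <= rsum k (fun j => c j * N j * (nb j - nh j)) ->
  - rsum k (fun j => N j * (nb j + nh j)) <= ce ->
  uu + rsum k (fun j => a j * nh j) <= (1 + m) * (vv + rsum k (fun j => a j * nb j)).
Proof.
  intros Ha Hnb Hm Hm0 Hvv Hu Hcr Hce.
  (* with a_j = 2 (c_j - 1) N_j the contributions of nh_j cancel exactly *)
  assert (Hterm : rsum k (fun j => a j * nh j) + 2 * rsum k (fun j => c j * N j * (nb j - nh j))
                  + 2 * rsum k (fun j => N j * (nb j + nh j))
                  <= (1 + m) * rsum k (fun j => a j * nb j)).
  { rewrite <- !rsum_scal_l, <- !rsum_plus; apply rsum_le; intros j Hj.
    specialize (Hm j Hj); specialize (Hnb j Hj); rewrite (Ha j Hj) in *; nra. }
  assert (0 <= m * vv) by nra.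
  lra.
Qed.

Lemma max_lt_ge k f j : (j < k)%nat -> f j <= max_lt k f.
Proof.
  unfold max_lt; intros Hj; assert (Hjk : (j <= Nat.pred k)%nat) by lia.
  induction (Nat.pred k) as [|k' IH]; simpl.
  - replace j with 0%nat by lia; lra.
  - destruct (Nat.eq_dec j (S k')) as [->|Hne]; [apply Rmax_r|].
    eapply Rle_trans; [apply IH; lia|apply Rmax_l].
Qed.

Theorem mainTheorem8
  (n p k : nat) (X : mat) (bstar eps Y : vec) (g dg : R -> R)
  (M P : nat -> mat) (q c lam : nat -> R) (bhat : vec) :
  (forall i, (i < n)%nat -> Y i = mv p X bstar i + eps i) ->
  link_ok n g dg ->
  (1 <= k)%nat ->
  (forall j, (j < k)%nat -> 1 <= q j) ->
  (forall b : vec, (forall j, (j < k)%nat -> vec_eq p (mv p (M j) b) (fun _ => 0)) ->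
     vec_eq p b (fun _ => 0)) ->
  (forall j, (j < k)%nat -> mat_eq p p (mm p (P j) (P j)) (P j)) ->
  mat_eq p p (msum k (fun j => mm p (P j) (mm p (pinv p p (M j)) (M j)))) idm ->
  (exists i, (i < n)%nat /\ Y i <> 0) ->
  (forall j, (j < k)%nat -> 0 < Dnoise n p X P M q eps j) ->
  (forall j, (j < k)%nat -> 1 < c j) ->
  (forall j, (j < k)%nat -> 0 < lam j) ->
  is_argmin n p k g X Y M q lam bhat ->
  0 < sqnorm n (resid n p X Y bhat) ->
  (forall j, (j < k)%nat ->
     lam j / (2 * dg (sqnorm n (resid n p X Y bhat))) = c j * Dnoise n p X P M q eps j) ->
  let a := fun j => 2 * (c j - 1) * Dnoise n p X P M q eps j in
  forall b : vec,
    La n p k X bstar M q a bhat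
      <= (1 + max_lt k (fun j => 4 * Dnoise n p X P M q eps j / a j))
         * La n p k X bstar M q a b.
Proof.
  intros Hmod Hlink Hk Hq _ _ Hpart [i0 [Hi0 _]] HN Hc Hlam Hmin Hs Hcal a b.
  destruct Hlink as (_ & _ & _ & _ & Hgd & _ & Hdgp & _).
  set (N := Dnoise n p X P M q eps) in *.
  set (m := max_lt k (fun j => 4 * N j / a j)).
  assert (Ha : forall j, (j < k)%nat -> 0 < a j).
  { intros j Hj; specialize (Hc j Hj); specialize (HN j Hj); unfold a; cbv beta; nra. }
  assert (Hm : forall j, (j < k)%nat -> 4 * N j <= m * a j).
  { intros j Hj; specialize (Ha j Hj).
    replace (4 * N j) with (4 * N j / a j * a j) by (field; lra).
    apply Rmult_le_compat_r; [lra|apply (max_lt_ge k (fun j => 4 * N j / a j)); auto]. }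
  assert (Hm0 : 0 <= m).
  { specialize (Hm 0%nat Hk); specialize (HN 0%nat Hk); specialize (Ha 0%nat Hk); nra. }
  assert (Hcore := oracle_combination k N c a
    (fun j => lq_norm (q j) p (mv p (M j) b)) (fun j => lq_norm (q j) p (mv p (M j) bhat)) m
    _ _ _ _ (fun j _ => eq_refl) (fun j _ => lq_norm_nonneg _ _ _) Hm Hm0 (sqnorm_nonneg _ _)
    (prediction_error_le n p X bstar eps Y bhat b Hmod)
    (argmin_first_order_calibrated n p k g dg X Y M q lam (fun j => c j * N j) bhat b Hq
       (fun j Hj => Rlt_le _ _ (Hlam j Hj)) Hmin (Hgd _ Hs) (Hdgp _ Hs) Hcal)
    (noise_correlation_ge n p k X M P q eps b bhat Hq Hpart)).
  assert (0 < / INR n) by (apply Rinv_0_lt_compat, lt_0_INR; lia).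
  unfold La; nra.
Qed.
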